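(* Let $\kappa$ be a regular cardinal and $\mathbf m=(\mathfrak B,D)\in K^{\mathrm{ba}}_\kappa$. Then every $T_{\mathrm{ord}}$-$(\aleph_0,\aleph_0)$-moral problem in $\mathbf m$ has a solution in $\mathbf m$.
   Context: $K^{\mathrm{ba}}_\kappa$ is the class of pairs $(\mathfrak B,D)$ with $\mathfrak B$ a complete Boolean algebra satisfying the $\kappa$-chain condition and $D$ a filter on $\mathfrak B$. Let $I=I_1+I_2$ with $I_1=\{1\}\times\omega$ ordered as $\omega$ and $I_2=\{2\}\times\omega$ ordered reversely, $I_1$ before $I_2$. A $T_{\mathrm{ord}}$-$(\aleph_0,\aleph_0)$-moral problem in $\mathbf m$ is $\langle\mathbf a_{s,t}:s<_It\rangle$, $\mathbf a_{s,t}\in D$, such that for every finite $u\subseteq I$ and $\mathbf t:\{(s,t)\in u^2:s<_It\}\to\{0,1\}$ with $\bigcap\mathbf a_{s,t}^{\mathbf t(s,t)}>0$ ($\mathbf a^1=\mathbf a$, $\mathbf a^0=1-\mathbf a$) there is $f:u\to\{0,\dots,|u|-1\}$ with $\mathbf t(s,t)=1\iff f(s)\le f(t)$. A solution is $\langle\mathbf b_s:s\in I\rangle$ with $\mathbf b_s\in D$ and $\mathbf b_{s_1}\cap\mathbf b_{s_2}\le\mathbf a_{s_1,s_2}$ for all $s_1\in I_1,s_2\in I_2$. *)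

From HB Require Import structures.
From mathcomp Require Import all_boot all_order.
Set Implicit Arguments. Unset Strict Implicit. Unset Printing Implicit Defensive.
Import Order.TTheory.
Local Open Scope order_scope.

Definition card_le (A B : Type) : Prop := exists f : A -> B, injective f.
Definition card_lt (A B : Type) : Prop := card_le A B /\ ~ card_le B A.

Definition regular_cardinal (K : Type) : Prop :=
  card_le nat K /\
  forall (J : Type) (S : J -> K -> Prop),
    card_lt J K -> (forall j, card_lt {x : K | S j x} K) ->
    ~ (forall x : K, exists j, S j x).

(* A Boolean algebra is a complemented distributive lattice with top and bottom
   (mathcomp's ctbDistrLatticeType); meet `&`, join `|`, complement ~`. *)

Definition complete_ba {d} (B : ctbDistrLatticeType d) : Prop :=
  forall P : B -> Prop, exists x : B,
    (forall y, P y -> y <= x) /\ (forall z, (forall y, P y -> y <= z) -> x <= z).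

Definition antichain {d} (B : ctbDistrLatticeType d) (A : B -> Prop) : Prop :=
  (forall x, A x -> x != \bot) /\
  (forall x y, A x -> A y -> x <> y -> x `&` y = \bot).

Definition chain_condition (K : Type) {d} (B : ctbDistrLatticeType d) : Prop :=
  forall A : B -> Prop, antichain A -> card_lt {x : B | A x} K.

Definition is_filter {d} (B : ctbDistrLatticeType d) (D : B -> Prop) : Prop :=
  D \top /\
  (forall x y, D x -> x <= y -> D y) /\
  (forall x y, D x -> D y -> D (x `&` y)).

(* inl n = (1,n) in I_1 (ordered as omega), inr n = (2,n) in I_2 (reverse order),
   I_1 before I_2. *)
Definition Iidx := (nat + nat)%type.

Definition ltI (s t : Iidx) : bool :=
  match s, t with
  | inl m, inl n => (m < n)%N
  | inr m, inr n => (n < m)%N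
  | inl _, inr _ => true
  | inr _, inl _ => false
  end.

(* a^1 = a, a^0 = 1 - a *)
Definition bpow {d} {B : ctbDistrLatticeType d} (a : B) (e : bool) : B :=
  if e then a else ~` a.

(* T_ord-(aleph_0,aleph_0)-moral problem in (B,D): a_{s,t} (used for s <_I t) *)
Definition moral_problem {d} (B : ctbDistrLatticeType d) (D : B -> Prop)
  (a : Iidx -> Iidx -> B) : Prop :=
  (forall s t, ltI s t -> D (a s t)) /\
  forall (u : seq Iidx) (tt : Iidx -> Iidx -> bool), uniq u ->
    \bot < \meet_(s <- u) \meet_(t <- u | ltI s t) bpow (a s t) (tt s t) ->
    exists f : Iidx -> nat,
      (forall s, s \in u -> (f s < size u)%N) /\
      (forall s t, s \in u -> t \in u -> ltI s t ->
         (tt s t = true <-> (f s <= f t)%N)).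

Definition moral_solution {d} (B : ctbDistrLatticeType d) (D : B -> Prop)
  (a : Iidx -> Iidx -> B) (b : Iidx -> B) : Prop :=
  (forall s, D (b s)) /\
  (forall m n : nat, b (inl m) `&` b (inr n) <= a (inl m) (inr n)).

(* A filter is closed under finite meets, so the meet of the square
   a_((1,i),(2,j)), i, j <= N, lies in D; let b_(1,N) and b_(2,N) both be this
   meet.  Given m and n, whichever of b_(1,m), b_(2,n) has the larger index
   already lies below a_((1,m),(2,n)). *)
From mathcomp Require Import all_boot all_order.
Import Order.TTheory.
Local Open Scope order_scope.

Definition meet_square {d} {L : tMeetSemilatticeType d}
    (f : nat -> nat -> L) (N : nat) : L :=
  \meet_(i <- iota 0 N.+1) \meet_(j <- iota 0 N.+1) f i j.

Lemma meet_square_le {d} {L : tMeetSemilatticeType d}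
    (f : nat -> nat -> L) (N m n : nat) :
  (m <= N)%N -> (n <= N)%N -> meet_square f N <= f m n.
Proof.
move=> leMN leNN.
have iota_mem k : (k <= N)%N -> k \in iota 0 N.+1 by rewrite mem_iota ltnS.
apply: le_trans (meets_inf_seq _ (iota_mem _ leMN) isT) _.
exact: meets_inf_seq (iota_mem _ leNN) isT.
Qed.

Lemma filter_meet_square {d} {B : ctbDistrLatticeType d} (D : B -> Prop)
    (f : nat -> nat -> B) (N : nat) :
  is_filter D -> (forall m n, D (f m n)) -> D (meet_square f N).
Proof.
move=> [Dtop [_ DI]] Df.
by apply: (big_ind D) => // i _; apply: (big_ind D).
Qed.

Theorem mainTheorem9 (K : Type) (d : Order.disp_t) (B : ctbDistrLatticeType d)
  (D : B -> Prop) :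
  regular_cardinal K -> complete_ba B -> chain_condition K B -> is_filter D ->
  forall a : Iidx -> Iidx -> B, moral_problem D a ->
  exists b : Iidx -> B, moral_solution D a b.
Proof.
move=> _ _ _ filterD a [Da _].
pose a12 m n := a (inl m) (inr n).
exists (fun s => let: (inl N | inr N) := s in meet_square a12 N); split.
  by case=> N; apply: filter_meet_square => // m n; apply: Da.
move=> m n; case: (leqP m n) => [lemn | /ltnW ltnm].
  by apply: leIxr; apply: meet_square_le.
by apply: leIxl; apply: meet_square_le.
Qed.
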